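(* For every preference profile $P$, every Pareto-optimal assignment belongs to the top cycle, i.e. $\mathit{PO}(P)\subseteq \mathit{TC}(P)$.
   Context: Let $N=\{1,\dots,n\}$ be agents and $H$ a set of $n$ houses. A profile $P=(\succ_1,\dots,\succ_n)$ gives each agent a strict linear order on $H$. An assignment is a bijection $\mu:N\to H$; $M$ is the set of all assignments. Agent $x$ weakly prefers $\mu$ to $\lambda$ if $\mu(x)\succ_x\lambda(x)$ or $\mu(x)=\lambda(x)$, strictly if $\mu(x)\succ_x\lambda(x)$. $N_{\mu,\lambda}$ is the set of agents weakly preferring $\mu$ to $\lambda$; $\mu\succsim\lambda$ if $|N_{\mu,\lambda}|\ge|N_{\lambda,\mu}|$, and $\succsim^*$ is the transitive closure of $\succsim$. The top cycle is $\mathit{TC}(P)=\{\mu\in M:\mu\succsim^*\lambda\text{ for all }\lambda\in M\}$. $\mu$ Pareto-dominates $\lambda$ if all agents weakly prefer $\mu$ to $\lambda$ and some agent strictly; $\mathit{PO}(P)$ is the set of assignments not Pareto-dominated by any assignment. *)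

From Stdlib Require Import Relation_Operators.
From mathcomp Require Import all_boot.
Set Implicit Arguments. Unset Strict Implicit. Unset Printing Implicit Defensive.

(* A profile assigns to each agent x a relation [P x : rel H], read
   "h is strictly preferred to h' by x", required to be a strict linear order. *)
Definition strict_linear_order (H : finType) (r : rel H) : Prop :=
  irreflexive r /\ transitive r /\ (forall h h', h != h' -> r h h' || r h' h).

Definition profile (N H : finType) := N -> rel H.

Definition valid_profile (N H : finType) (P : profile N H) : Prop :=
  forall x, strict_linear_order (P x).

Definition assignment (N H : finType) (mu : N -> H) : Prop := bijective mu.

Definition wpref (N H : finType) (P : profile N H) (x : N) (mu la : N -> H) : bool :=
  P x (mu x) (la x) || (mu x == la x).

Definition spref (N H : finType) (P : profile N H) (x : N) (mu la : N -> H) : bool :=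
  P x (mu x) (la x).

Definition Nset (N H : finType) (P : profile N H) (mu la : N -> H) : {set N} :=
  [set x | wpref P x mu la].

Definition maj (N H : finType) (P : profile N H) (mu la : N -> H) : Prop :=
  #|Nset P la mu| <= #|Nset P mu la|.

Definition majM (N H : finType) (P : profile N H) : (N -> H) -> (N -> H) -> Prop :=
  fun mu la => assignment mu /\ assignment la /\ maj P mu la.

Definition maj_star (N H : finType) (P : profile N H) : (N -> H) -> (N -> H) -> Prop :=
  clos_trans (N -> H) (majM P).

Definition top_cycle (N H : finType) (P : profile N H) (mu : N -> H) : Prop :=
  assignment mu /\ forall la, assignment la -> maj_star P mu la.

Definition pareto_dominates (N H : finType) (P : profile N H) (mu la : N -> H) : Prop :=
  (forall x, wpref P x mu la) /\ exists x, spref P x mu la.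

Definition pareto_optimal (N H : finType) (P : profile N H) (mu : N -> H) : Prop :=
  assignment mu /\ ~ exists la, assignment la /\ pareto_dominates P la mu.

From mathcomp Require Import all_boot.
From mathcomp Require Import perm.
From Stdlib Require Import Relation_Operators.

Set Implicit Arguments.
Unset Strict Implicit.
Unset Printing Implicit Defensive.

(* Induction on the number of agents on which lambda differs from the
   Pareto-optimal mu.  If lambda <> mu, Pareto-optimality gives an agent x
   with mu(x) strictly better than lambda(x).  Swapping the houses of x and of
   the agent y holding mu(x) under lambda yields lambda' with
   lambda' >= lambda: only y can lose and x gains strictly, so at least n - 1
   agents weakly prefer lambda' while at most n - 1 weakly prefer lambda.
   Moreover lambda' agrees with mu at x, so by induction mu >=* lambda'. *)

Section TopCycle.

Variables (N H : finType) (P : profile N H).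
Hypothesis P_valid : valid_profile P.

Definition disagree (mu la : N -> H) : {set N} := [set z | mu z != la z].

Lemma pref_irr x a : ~~ P x a a.
Proof. by case: (P_valid x) => irr _; rewrite irr. Qed.

Lemma pref_asym x a b : P x a b -> ~~ P x b a.
Proof.
case: (P_valid x) => _ [tr _] hab; apply/negP => hba.
by move: (pref_irr x a); rewrite (tr _ _ _ hab hba).
Qed.

Lemma pref_total x a b : a != b -> ~~ P x a b -> P x b a.
Proof. by case: (P_valid x) => _ [_ tot] /tot; case: (P x a b). Qed.

Lemma maj_star_disagree0 (mu la : N -> H) :
  assignment mu -> assignment la -> disagree mu la = set0 -> maj_star P mu la.
Proof.
move=> hmu hla /setP agree; apply: t_step; split=> //; split=> //.
apply: subset_leq_card; apply/subsetP => z _.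
by move: (agree z); rewrite !inE /wpref => /negbFE ->; rewrite orbT.
Qed.

Lemma assignment_tperm (la : N -> H) x y :
  assignment la -> assignment (la \o tperm x y).
Proof. by move=> hla; apply: bij_comp => //; apply: (inv_bij (tpermK x y)). Qed.

Lemma maj_tperm (la : N -> H) x y :
  P x (la y) (la x) -> maj P (la \o tperm x y) la.
Proof.
move=> hx; rewrite /maj /Nset; apply: (@leq_trans #|[set~ x]|).
  apply: subset_leq_card; apply/subsetP => z; rewrite !inE /wpref /=.
  apply: contraTneq => ->; rewrite tpermL (negbTE (pref_asym hx)) /=.
  by apply: contraTneq hx => <-; rewrite pref_irr.
rewrite cardsC1 -(cardsC1 y); apply: subset_leq_card; apply/subsetP => z.
rewrite !inE /wpref /=; case: tpermP => [->|->|_ _] hz.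
- by rewrite hx.
- by rewrite eqxx in hz.
- by rewrite eqxx orbT.
Qed.

Lemma disagree_tperm (mu la : N -> H) x y :
  injective mu -> la y = mu x -> x \in disagree mu la ->
  #|disagree mu (la \o tperm x y)| < #|disagree mu la|.
Proof.
move=> mu_inj hy hx; rewrite [X in _ < X](cardsD1 x) hx ltnS; apply: subset_leq_card.
move: hx; rewrite inE => hx.
apply/subsetP => z; rewrite !inE /=; case: tpermP => [->|->|hzx _].
- by rewrite hy eqxx.
- move=> _; rewrite hy (inj_eq mu_inj) andbb.
  by apply: contraNneq hx => yx; rewrite -hy yx.
- by move=> ->; rewrite andbT; apply/eqP.
Qed.

Lemma strict_pref_of_undominated (mu la : N -> H) :
  ~ pareto_dominates P la mu -> disagree mu la != set0 ->
  exists x, P x (mu x) (la x).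
Proof.
move=> undom /set0Pn [z0]; rewrite inE => hz0.
have [/existsP //|] := boolP [exists x, P x (mu x) (la x)].
rewrite negb_exists => /forallP notP; exfalso; apply: undom; split.
  move=> z; rewrite /wpref; have [_|hz] := eqVneq (la z) (mu z); first exact: orbT.
  by rewrite orbF pref_total // eq_sym.
by exists z0; apply: pref_total.
Qed.

Lemma maj_star_of_pareto_optimal mu la :
  pareto_optimal P mu -> assignment la -> maj_star P mu la.
Proof.
move=> [hmu undom]; move: {2}#|_|.+1 (ltnSn #|disagree mu la|) => k.
elim: k la => [//|k IH] la; rewrite ltnS => hk hla.
have [hdis|hdis] := eqVneq (disagree mu la) set0.
  exact: maj_star_disagree0.
have [x hx] : exists x, P x (mu x) (la x).
  by apply: strict_pref_of_undominated => // dom; apply: undom; exists la.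
case: (hla) => g _ glaK; set y := g (mu x).
have hy : la y = mu x by rewrite /y glaK.
have hla' := assignment_tperm x y hla.
apply: (@t_trans _ _ _ (la \o tperm x y)).
  apply: IH => //; apply: leq_trans hk.
  apply: disagree_tperm => //; first exact: bij_inj.
  by rewrite inE; apply: contraTneq hx => <-; rewrite pref_irr.
apply: t_step; split=> //; split=> //.
by apply: maj_tperm; rewrite hy.
Qed.

End TopCycle.

Theorem proposition4p3 (N H : finType) (P : profile N H) :
  #|H| = #|N| -> valid_profile P ->
  forall mu : N -> H, pareto_optimal P mu -> top_cycle P mu.
Proof.
(* The cardinality hypothesis is implied by the bijectivity of mu. *)
move=> _ P_valid mu mu_po; split; first by case: mu_po.
by move=> la hla; apply: maj_star_of_pareto_optimal.
Qed.
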